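(* Let $\varepsilon=\varepsilon(n)\in(0,1/2)$ satisfy $1/\varepsilon = n^{o(1)}$. For every constant $C>0$ there exist constants $c>0$ and $n_0$ such that for every $n\ge n_0$ that is a power of $2$ the following holds: if an algorithm ${\mathcal A}=(M^{(0)},\dots,M^{(m)})$ in the linear algebraic model described in the context computes $\operatorname{Id}_n+\varepsilon F_n$ and is $(1+C\varepsilon)$-well conditioned, then $m\ge c\,\varepsilon^2 n\log n$.
   Context: For $n=2^k$, $F_n$ is the (normalized) $n\times n$ Walsh–Hadamard matrix, $F_n(i,j)=n^{-1/2}(-1)^{\langle i-1,j-1\rangle}$, where $\langle a,b\rangle$ is the dot product of the base-$2$ digit vectors of the integers $a,b$. For $i\ne i'$ and an angle $\Theta$, $R_{i,i',\Theta}\in\mathbb R^{n\times n}$ is the matrix with $R(i,i)=R(i',i')=\cos\Theta$, $R(i,i')=\sin\Theta$, $R(i',i)=-\sin\Theta$, all other diagonal entries $1$ and all other entries $0$. An algorithm with $m$ steps is a sequence of real $n\times n$ matrices ${\mathcal A}=(M^{(0)}=\operatorname{Id}_n,M^{(1)},\dots,M^{(m)})$ where for each $t\in[m]$ either $M^{(t)}$ is obtained from $M^{(t-1)}$ by multiplying one row by a nonzero real constant, or $M^{(t)}=R_{i_t,i'_t,\Theta_t}M^{(t-1)}$ for some rows $i_t\neq i'_t$ and angle $\Theta_t$. ${\mathcal A}$ computes $X$ if $M^{(m)}=X$. The condition number $\kappa(M)$ of a nonsingular matrix is the ratio of its largest to smallest singular value; ${\mathcal A}$ is $\kappa$-well conditioned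 if $\kappa(M^{(t)})\le\kappa$ for all $t\in[m]$. Logarithms are base $2$. *)

From HB Require Import structures.
From mathcomp Require Import all_boot all_order all_algebra.
From mathcomp Require Import reals exp trigo.
Set Implicit Arguments. Unset Strict Implicit. Unset Printing Implicit Defensive.
Import Order.TTheory GRing.Theory Num.Theory.
Local Open Scope ring_scope.

Section Defs.
Variable R : realType.

Definition bitdot (k a b : nat) : nat :=
  \sum_(l < k) (odd (a %/ 2 ^ l) && odd (b %/ 2 ^ l)).

(* normalized Walsh-Hadamard matrix of size n = 2^k, 0-indexed:
   F(i,j) = n^{-1/2} (-1)^{<i,j>}   (paper: 1-indexed, <i-1,j-1>) *)
Definition walsh (k : nat) : 'M[R]_(2 ^ k) :=
  \matrix_(i, j) ((-1) ^+ bitdot k i j / Num.sqrt ((2 ^ k)%:R)).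

Definition scale_row n (i : 'I_n) (c : R) (A : 'M[R]_n) : 'M[R]_n :=
  \matrix_(a, b) (if a == i then c * A a b else A a b).

Definition rot_mx n (i i' : 'I_n) (th : R) : 'M[R]_n :=
  \matrix_(a, b)
    (if (a == i) && (b == i) then cos th
     else if (a == i') && (b == i') then cos th
     else if (a == i) && (b == i') then sin th
     else if (a == i') && (b == i) then - sin th
     else if a == b then 1 else 0).

Definition alg_step n (A B : 'M[R]_n) : Prop :=
  (exists (i : 'I_n) (c : R), c != 0 /\ B = scale_row i c A) \/
  (exists (i i' : 'I_n) (th : R), i != i' /\ B = rot_mx i i' th *m A).

Definition is_algorithm n (m : nat) (M : nat -> 'M[R]_n) : Prop :=
  M 0%N = 1%:M /\ forall t, (1 <= t <= m)%N -> alg_step (M t.-1) (M t).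

Definition singular_value n (A : 'M[R]_n) (s : R) : Prop :=
  0 <= s /\ eigenvalue (A^T *m A) (s ^+ 2).

Definition well_cond n (kap : R) (A : 'M[R]_n) : Prop :=
  A \in unitmx /\
  forall s t, singular_value A s -> singular_value A t -> s <= kap * t.

Definition log2 (x : R) : R := ln x / ln 2.

End Defs.

From HB Require Import structures.
From mathcomp Require Import all_boot all_order all_algebra.
From mathcomp Require Import reals exp trigo.
From mathcomp Require Import classical_sets topology normedtype derive matrix_normedtype.
From mathcomp Require Import ring lra.
Import Order.TTheory GRing.Theory Num.Theory.
Import numFieldTopology.Exports numFieldNormedType.Exports.
Local Open Scope ring_scope.

Set Implicit Arguments. Unset Strict Implicit. Unset Printing Implicit Defensive.

(* For invertible M let
     Phi(M) = sum_(a,b) h(M_ab (M^-1)_ba),   h(p) = - p ln |p|.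
   Scaling a row leaves every product M_ab (M^-1)_ba unchanged.  A rotation of rows i, i'
   changes only the products in rows i and i', and keeps, for each column b, the sum of the
   two products in rows i and i'; since h(L p) = L h(p) - L p ln L, column b then moves Phi by at
   most 4 times the total absolute value of the four products involved.  For a
   kappa-well-conditioned M, Cauchy-Schwarz gives sum_b |M_ab| |(M^-1)_ba| <= s_max / s_min
   <= kappa, so each rotation lowers Phi by at most 16 kappa.  Finally Phi(Id) = 0 while
   Phi(Id + eps F_n) <= - (n - 1) eps^2 ln n, hence m >= (n - 1) eps^2 ln n / (16 kappa). *)

Section QuadraticForms.
Variable R : realType.

Definition form n (S : 'M[R]_n) (v w : 'rV[R]_n) : R := (v *m S *m w^T) 0 0.

Definition sqnorm n (v : 'rV[R]_n) : R := \sum_i v 0 i ^+ 2.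

Lemma form_sym n (S : 'M[R]_n) v w : S^T = S -> form S v w = form S w v.
Proof.
move=> sS; rewrite /form -[in RHS](trmxK (w *m S *m v^T)) [in RHS]mxE.
by rewrite !trmx_mul trmxK sS mulmxA.
Qed.

Lemma form_expand n (S : 'M[R]_n) v w t :
  form S (v + t *: w) (v + t *: w) =
  form S v v + t * (form S v w + form S w v) + t ^+ 2 * form S w w.
Proof.
rewrite /form linearD linearZ /= !mulmxDl !mulmxDr -!scalemxAl -!scalemxAr.
by rewrite !mxE; ring.
Qed.

Lemma formZ n (S : 'M[R]_n) a v : form S (a *: v) (a *: v) = a ^+ 2 * form S v v.
Proof. by rewrite /form linearZ /= -!scalemxAl -scalemxAr !mxE mulrA expr2. Qed.

Lemma formB n (S T : 'M[R]_n) v w : form (S - T) v w = form S v w - form T v w.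
Proof. by rewrite /form mulmxBr mulmxBl !mxE. Qed.

Lemma formN n (S : 'M[R]_n) v w : form (- S) v w = - form S v w.
Proof. by rewrite /form mulmxN mulNmx !mxE. Qed.

Lemma form1 n (v : 'rV[R]_n) : form 1%:M v v = sqnorm v.
Proof. by rewrite /form mulmx1 mxE; apply: eq_bigr => i _; rewrite mxE expr2. Qed.

Lemma form_scalar n (l : R) (v : 'rV[R]_n) : form l%:M v v = l * sqnorm v.
Proof. by rewrite -form1 /form mul_mx_scalar mulmx1 -scalemxAl mxE. Qed.

Lemma form_eigen n (S : 'M[R]_n) l v : v *m S = l *: v -> form S v v = l * sqnorm v.
Proof. by move=> vS; rewrite -form_scalar /form vS mul_mx_scalar. Qed.

Lemma form_mul_tr n (X : 'M[R]_n) v : form (X *m X^T) v v = sqnorm (v *m X).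
Proof. by rewrite -form1 /form mulmx1 trmx_mul !mulmxA. Qed.

Lemma sqnorm_ge0 n (v : 'rV[R]_n) : 0 <= sqnorm v.
Proof. by rewrite sumr_ge0 // => i _; rewrite sqr_ge0. Qed.

Lemma sqnorm_eq0 n (v : 'rV[R]_n) : (sqnorm v == 0) = (v == 0).
Proof.
apply/idP/eqP => [/eqP v0|->]; last by rewrite /sqnorm big1 // => i _; rewrite mxE expr0n.
apply/rowP => i; apply/eqP; rewrite mxE -sqrf_eq0.
by rewrite (psumr_eq0P (fun j _ => sqr_ge0 (v 0 j)) v0).
Qed.

Lemma sqnorm_gt0 n (v : 'rV[R]_n) : v != 0 -> 0 < sqnorm v.
Proof. by move=> v0; rewrite lt_def sqnorm_eq0 v0 sqnorm_ge0. Qed.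

Lemma sqnormZ n a (v : 'rV[R]_n) : sqnorm (a *: v) = a ^+ 2 * sqnorm v.
Proof. by rewrite mulr_sumr; apply: eq_bigr => i _; rewrite mxE exprMn. Qed.

Lemma sqnorm_row n (A : 'M[R]_n) i : sqnorm (delta_mx 0 i *m A) = \sum_j A i j ^+ 2.
Proof. by rewrite -rowE; apply: eq_bigr => j _; rewrite mxE. Qed.

Lemma sqnorm_delta n (i : 'I_n) : sqnorm (delta_mx 0 i) = 1.
Proof.
rewrite /sqnorm (bigD1 i) //= big1 ?addr0; first by rewrite mxE !eqxx expr1n.
by move=> j ji; rewrite mxE (negbTE ji) andbF expr0n.
Qed.

Lemma coord_sq_le_sqnorm n (v : 'rV[R]_n) j : v 0 j ^+ 2 <= sqnorm v.
Proof. by rewrite /sqnorm (bigD1 j) //= lerDl sumr_ge0 // => i _; rewrite sqr_ge0. Qed.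

Lemma form_continuous n (S : 'M[R]_n) : continuous (fun v => form S v v).
Proof.
have formE v : form S v v = \sum_i \sum_j v 0 i * S i j * v 0 j.
  rewrite /form mxE exchange_big /=; apply: eq_bigr => j _.
  by rewrite !mxE big_distrl.
rewrite (boolp.funext formE).
apply: continuous_big; first exact: add_continuous.
move=> i _; apply: continuous_big; first exact: add_continuous.
move=> j _ v.
apply: (@continuousM _ _ (fun v : 'rV[R]_n => v 0 i * S i j) (fun v => v 0 j)).
  apply: (@continuousM _ _ (fun v : 'rV[R]_n => v 0 i) (fun=> S i j)).
    exact: coord_continuous.
  exact: cst_continuous.
exact: coord_continuous.
Qed.

Lemma form_max_sphere n (S : 'M[R]_n.+1) :
  exists2 c, sqnorm c = 1 & forall v, form S v v <= form S c c * sqnorm v.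
Proof.
pose sphere := [set v : 'rV[R]_n.+1 | sqnorm v = 1]%classic.
have sphere0 : (sphere !=set0)%classic by exists (delta_mx 0 0); exact: sqnorm_delta.
have sphere_compact : compact sphere.
  apply: bounded_closed_compact.
    exists 1; split => // x x1 v /= v1; rewrite [X in X <= _]/Num.Def.normr /= mx_normrE.
    apply/bigmax_leP; split => [|[i j] _ /=]; first by rewrite ltW // (lt_trans ltr01 x1).
    apply: le_trans (ltW x1); have := coord_sq_le_sqnorm v j.
    by rewrite (ord1 i) v1 ler_norml => ?; apply/andP; split; nra.
  have -> : sphere = ((fun v => form 1%:M v v) @^-1` [set x | x = 1])%classic.
    by apply/seteqP; split => v /=; rewrite form1.
  by apply: (continuous_closedP _).1; [exact: form_continuous | exact: closed_eq].
have [c /set_mem c1 cmax] :=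
  compact_EVT_max sphere0 sphere_compact (continuous_subspaceT (@form_continuous _ S)).
exists c => // v; have [->|v0] := eqVneq v 0.
  have /eqP -> : sqnorm (0 : 'rV[R]_n.+1) == 0 by rewrite sqnorm_eq0.
  by rewrite /form !mul0mx mxE mulr0.
have v_gt0 := sqnorm_gt0 v0; set r := Num.sqrt (sqnorm v).
have r_gt0 : 0 < r by rewrite sqrtr_gt0.
have rr : r ^+ 2 = sqnorm v by rewrite sqr_sqrtr // ltW.
have /cmax : r^-1 *: v \in sphere.
  by rewrite inE /sphere /= sqnormZ exprVn rr mulVf // gt_eqF.
rewrite formZ exprVn rr ler_pdivrMl // => /le_trans; apply.
by rewrite mulrC.
Qed.

Lemma psd_form_kernel n (S : 'M[R]_n) c : S^T = S -> (forall v, 0 <= form S v v) ->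
  form S c c = 0 -> c *m S = 0.
Proof.
(* Positivity at c - t (c S) gives 0 <= - 2 t |c S|^2 + t^2 form S (c S) (c S) for all t. *)
move=> sS psd c0; set w := c *m S; apply/eqP; rewrite -sqnorm_eq0.
have cw : form S c w = sqnorm w by rewrite -form1 /form mulmx1.
set a := sqnorm w; set b := form S w w.
have a_ge0 : 0 <= a := sqnorm_ge0 w.
have key t : 0 <= - 2 * t * a + t ^+ 2 * b.
  have := psd (c + (- t) *: w).
  by rewrite form_expand c0 (form_sym w c sS) cw sqrrN -/a -/b; lra.
set t := a / (`|b| + 1).
have t_ge0 : 0 <= t by rewrite divr_ge0 // addr_ge0.
have ta : t * (`|b| + 1) = a by rewrite /t mulfVK // gt_eqF // ltr_wpDl.
have tb : t ^+ 2 * b <= t ^+ 2 * `|b| by rewrite ler_wpM2l ?sqr_ge0 ?ler_norm.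
have tta : t ^+ 2 * `|b| + t ^+ 2 = t * a by rewrite -ta; ring.
have t0 : t = 0.
  apply/eqP; rewrite -sqrf_eq0 eq_le sqr_ge0 andbT.
  have := key t; have := mulr_ge0 t_ge0 a_ge0; lra.
by rewrite -ta t0 mul0r.
Qed.

Lemma sym_max_eigenvalue n (S : 'M[R]_n.+1) : S^T = S ->
  exists l, eigenvalue S l /\ forall v, form S v v <= l * sqnorm v.
Proof.
(* l I - S is positive semidefinite and its form vanishes at the maximiser c. *)
move=> sS; have [c c1 cmax] := form_max_sphere S; set l := form S c c in cmax.
exists l; split => //.
have sym : (l%:M - S)^T = l%:M - S by rewrite linearB /= tr_scalar_mx sS.
have psd v : 0 <= form (l%:M - S) v v by rewrite formB form_scalar subr_ge0 cmax.
have := psd_form_kernel (c := c) sym psd; rewrite formB form_scalar c1 mulr1 subrr.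
move=> /(_ erefl) /eqP; rewrite mulmxBr mul_mx_scalar subr_eq0 => /eqP cS.
apply/eigenvalueP; exists c; first by rewrite -cS.
by rewrite -sqnorm_eq0 c1 oner_eq0.
Qed.

Lemma sym_min_eigenvalue n (S : 'M[R]_n.+1) : S^T = S ->
  exists l, eigenvalue S l /\ forall v, l * sqnorm v <= form S v v.
Proof.
move=> sS; have sN : (- S)^T = - S by rewrite linearN /= sS.
have [l [/eigenvalueP [v vS v0] lmax]] := sym_max_eigenvalue sN.
exists (- l); split.
  by apply/eigenvalueP; exists v => //; rewrite -[v *m S]opprK -mulmxN vS scaleNr.
by move=> w; have := lmax w; rewrite formN mulNr lerNl.
Qed.

End QuadraticForms.

Section Conditioning.
Variable R : realType.

Lemma eigenvalue_gram_gt0 n (X : 'M[R]_n) l :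
  X \in unitmx -> eigenvalue (X *m X^T) l -> 0 < l.
Proof.
move=> Xu /eigenvalueP [v vXX v0].
have vX0 : v *m X != 0 by apply: contra v0 => /eqP vX; rewrite -(mulmxK Xu v) vX mul0mx.
have := sqnorm_gt0 vX0; rewrite -form_mul_tr (form_eigen vXX).
by rewrite pmulr_lgt0 // sqnorm_gt0.
Qed.

Lemma eigenvalue_gramC n (A : 'M[R]_n) l :
  A \in unitmx -> eigenvalue (A *m A^T) l -> eigenvalue (A^T *m A) l.
Proof.
move=> Au /eigenvalueP [v vAA v0]; apply/eigenvalueP; exists (v *m A).
  by rewrite mulmxA -(mulmxA v) vAA scalemxAl.
by apply: contra v0 => /eqP vA; rewrite -(mulmxK Au v) vA mul0mx.
Qed.

Lemma max_singular_value n (A : 'M[R]_n.+1) : A \in unitmx ->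
  exists s, singular_value A s /\ forall v, sqnorm (v *m A) <= s ^+ 2 * sqnorm v.
Proof.
move=> Au; have sym : (A *m A^T)^T = A *m A^T by rewrite trmx_mul trmxK.
have [l [eig lmax]] := sym_max_eigenvalue sym.
have l_gt0 := eigenvalue_gram_gt0 Au eig.
exists (Num.sqrt l); rewrite sqr_sqrtr ?ltW //; split; last by move=> v; rewrite -form_mul_tr.
by split; rewrite ?sqr_sqrtr ?sqrtr_ge0 ?ltW //; exact: eigenvalue_gramC.
Qed.

Lemma min_singular_value n (A : 'M[R]_n.+1) : A \in unitmx ->
  exists2 t, 0 < t & singular_value A t /\
    forall v, t ^+ 2 * sqnorm v <= sqnorm (v *m A^T).
Proof.
move=> Au; have sym : (A^T *m A)^T = A^T *m A by rewrite trmx_mul trmxK.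
have [l [eig lmin]] := sym_min_eigenvalue sym.
have gram v : form (A^T *m A) v v = sqnorm (v *m A^T).
  by rewrite -form_mul_tr trmxK.
have l_gt0 : 0 < l.
  by apply: (@eigenvalue_gram_gt0 _ A^T); rewrite ?unitmx_tr // trmxK.
exists (Num.sqrt l); first by rewrite sqrtr_gt0.
rewrite sqr_sqrtr ?ltW //; split; last by move=> v; rewrite -gram.
by split; rewrite ?sqr_sqrtr ?sqrtr_ge0 ?ltW.
Qed.

Lemma sum_abs_mul_le n (a b : 'I_n -> R) al : 0 < al ->
  \sum_j `|a j| * `|b j| <= (al * \sum_j a j ^+ 2 + (\sum_j b j ^+ 2) / al) / 2.
Proof.
move=> al_gt0; rewrite mulr_sumr mulr_suml -big_split /= mulr_suml.
apply: ler_sum => j _; rewrite -(real_normK (num_real (a j))) -(real_normK (num_real (b j))).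
have -> : (al * `|a j| ^+ 2 + `|b j| ^+ 2 / al) / 2 =
    `|a j| * `|b j| + (al * `|a j| - `|b j|) ^+ 2 / (2 * al).
  by field; rewrite gt_eqF.
by rewrite lerDl divr_ge0 ?sqr_ge0 // mulr_ge0 // ltW.
Qed.

Lemma well_cond_row_bound n (kap : R) (A : 'M[R]_n) : well_cond kap A ->
  forall i, \sum_j `|A i j| * `|invmx A j i| <= kap.
Proof.
case: n A => [A _ [] //|n A [Au wc] i].
have [s [svs smax]] := max_singular_value Au.
have [t t_gt0 [svt tmin]] := min_singular_value Au.
have s_le := wc _ _ svs svt.
have kap_ge1 : 1 <= kap by have := wc _ _ svt svt; rewrite -{1}(mul1r t) ler_pM2r.
have rowA : \sum_j A i j ^+ 2 <= s ^+ 2.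
  by have := smax (delta_mx 0 i); rewrite sqnorm_row sqnorm_delta mulr1.
have colA : t ^+ 2 * \sum_j invmx A j i ^+ 2 <= 1.
  have := tmin (delta_mx 0 i *m (invmx A)^T).
  rewrite -mulmxA -trmx_mul mulmxV // trmx1 mulmx1 sqnorm_delta.
  by rewrite sqnorm_row; under eq_bigr do rewrite mxE.
set X := \sum_j _ in rowA; set Y := \sum_j _ in colA.
have t2_gt0 : 0 < t ^+ 2 by rewrite exprn_gt0.
have s2_le : s ^+ 2 <= kap ^+ 2 * t ^+ 2.
  by rewrite -exprMn; have := svs.1; nra.
(* Weighting the AM-GM step by 1 / (kap t^2) balances |row_i A|^2 <= kap^2 t^2 against
   |col_i A^-1|^2 <= 1 / t^2. *)
pose al := (kap * t ^+ 2)^-1.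
have al_gt0 : 0 < al by rewrite invr_gt0 mulr_gt0 // (lt_le_trans ltr01).
apply: le_trans (sum_abs_mul_le (fun j => A i j) (fun j => invmx A j i) al_gt0) _.
have alX : al * X <= kap.
  rewrite mulrC ler_pdivrMr ?mulr_gt0 // ?(lt_le_trans ltr01) //.
  by rewrite mulrA -expr2 (le_trans rowA).
have Yal : Y / al <= kap by rewrite invrK; nra.
rewrite -/X -/Y; lra.
Qed.

End Conditioning.

Section Entropy.
Variable R : realType.

Definition ent (p : R) : R := - p * ln `|p|.

Lemma ent0 : ent 0 = 0.
Proof. by rewrite /ent oppr0 mul0r. Qed.

Lemma ent1 : ent 1 = 0.
Proof. by rewrite /ent normr1 ln1 mulr0. Qed.

Lemma ent_le0 p : 1 <= p -> ent p <= 0.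
Proof.
move=> p_ge1; rewrite /ent ger0_norm ?(le_trans ler01) //.
by rewrite mulNr oppr_le0 mulr_ge0 ?ln_ge0 ?(le_trans ler01).
Qed.

Lemma ent_norm_le1 p : `|p| <= 1 -> `|ent p| <= 1.
Proof.
move=> p_le1; have [->|p0] := eqVneq p 0; first by rewrite ent0 normr0.
have p_gt0 : 0 < `|p| by rewrite normr_gt0.
rewrite /ent normrM normrN ler0_norm ?ln_le0 //.
have lnV_le : - ln `|p| <= `|p|^-1.
  by rewrite -lnV ?posrE // ltW // ln_sublinear // invr_gt0.
by rewrite -(mulfV (lt0r_neq0 p_gt0)) ler_wpM2l.
Qed.

Lemma ent_rescale (S x : R) : 0 < S -> ent x = S * ent (x / S) - x * ln S.
Proof.
move=> S_gt0; have [->|x0] := eqVneq x 0; first by rewrite mul0r ent0; ring.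
rewrite /ent normrM normfV (gtr0_norm S_gt0) lnM ?posrE ?normr_gt0 ?invr_gt0 //.
by rewrite lnV ?posrE //; field; rewrite gt_eqF.
Qed.

Lemma ent_exchange_le p1 p2 q1 q2 : p1 + p2 = q1 + q2 ->
  `|ent p1 + ent p2 - (ent q1 + ent q2)| <= 4 * (`|p1| + `|p2| + `|q1| + `|q2|).
Proof.
move=> pq; set S := _ + _ + _ + _.
have n1 := normr_ge0 p1; have n2 := normr_ge0 p2.
have n3 := normr_ge0 q1; have n4 := normr_ge0 q2.
have [S0|S_gt0] := eqVneq S 0.
  have [-> -> -> ->] : [/\ p1 = 0, p2 = 0, q1 = 0 & q2 = 0].
    by split; apply/normr0_eq0; move: S0; rewrite /S; lra.
  by rewrite !ent0 !addr0 subrr normr0 mulr_ge0 ?addr_ge0.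
have {}S_gt0 : 0 < S by rewrite lt_def S_gt0 /S !addr_ge0.
have ent_small x : `|x| <= S -> `|ent (x / S)| <= 1.
  move=> xS; apply: ent_norm_le1.
  by rewrite normrM normfV (gtr0_norm S_gt0) ler_pdivrMr // mul1r.
(* Rescale by the total mass S: the ln S terms cancel because p1 + p2 = q1 + q2. *)
rewrite (ent_rescale p1 S_gt0) (ent_rescale p2 S_gt0).
rewrite (ent_rescale q1 S_gt0) (ent_rescale q2 S_gt0).
set a1 := ent (p1 / S); set a2 := ent (p2 / S); set a3 := ent (q1 / S); set a4 := ent (q2 / S).
have -> : S * a1 - p1 * ln S + (S * a2 - p2 * ln S) -
    (S * a3 - q1 * ln S + (S * a4 - q2 * ln S)) =
    S * (a1 + a2 - (a3 + a4)) - (p1 + p2 - (q1 + q2)) * ln S by ring.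
rewrite pq subrr mul0r subr0 normrM (gtr0_norm S_gt0) mulrC ler_pM2r //.
have /ent_small h1 : `|p1| <= S by rewrite /S; lra.
have /ent_small h2 : `|p2| <= S by rewrite /S; lra.
have /ent_small h3 : `|q1| <= S by rewrite /S; lra.
have /ent_small h4 : `|q2| <= S by rewrite /S; lra.
have := ler_normD a1 a2; have := ler_normD a3 a4; have := ler_normB (a1 + a2) (a3 + a4).
lra.
Qed.

Lemma ent_opp_le (x q r : R) : 1 <= x -> 0 < r <= q -> q <= x^-1 ->
  ent (- q) <= - (r * ln x).
Proof.
move=> x_ge1 /andP[r_gt0 rq] qx; have q_gt0 := lt_le_trans r_gt0 rq.
have x_gt0 := lt_le_trans ltr01 x_ge1; have lnx := ln_ge0 x_ge1.
have lnq : ln q <= - ln x by rewrite -lnV ?posrE // ler_ln ?posrE ?invr_gt0.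
rewrite /ent opprK normrN (gtr0_norm q_gt0).
have : q * ln q <= q * - ln x by rewrite ler_wpM2l // ltW.
nra.
Qed.

End Entropy.

Section Bits.
Local Open Scope nat_scope.

Lemma bitdot_sym k a b : bitdot k a b = bitdot k b a.
Proof. by apply: eq_bigr => l _; rewrite andbC. Qed.

Lemma odd_div_pow2_mod k l a :
  l < k -> odd (a %/ 2 ^ l) = odd ((a %% 2 ^ k) %/ 2 ^ l).
Proof.
move=> lk; rewrite {1}(divn_eq a (2 ^ k)).
have -> : 2 ^ k = 2 ^ (k - l) * 2 ^ l by rewrite -expnD subnK // ltnW.
rewrite mulnA divnMDl ?expn_gt0 // oddD oddM oddX subn_eq0 leqNgt lk /=.
by rewrite andbF.
Qed.

Lemma bitdot_modl k a b : bitdot k a b = bitdot k (a %% 2 ^ k) b.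
Proof. by apply: eq_bigr => l _; rewrite -odd_div_pow2_mod. Qed.

Lemma bitdot_modr k a b : bitdot k a b = bitdot k a (b %% 2 ^ k).
Proof. by rewrite bitdot_sym bitdot_modl bitdot_sym. Qed.

Lemma bitdotS k a b :
  bitdot k.+1 a b = bitdot k a b + (odd (a %/ 2 ^ k) && odd (b %/ 2 ^ k)).
Proof. by rewrite /bitdot big_ord_recr. Qed.

Lemma bitdotS_low k a j : j < 2 ^ k -> bitdot k.+1 a j = bitdot k a j.
Proof. by move=> jk; rewrite bitdotS (divn_small jk) andbF addn0. Qed.

Lemma bitdotS_high k a j : j < 2 ^ k ->
  bitdot k.+1 a (2 ^ k + j) = bitdot k a j + odd (a %/ 2 ^ k).
Proof.
move=> jk; rewrite bitdotS; have -> : (2 ^ k + j) %/ 2 ^ k = 1.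
  by rewrite -{1}(mul1n (2 ^ k)) divnMDl ?expn_gt0 // divn_small.
by rewrite andbT bitdot_modr modnDl -bitdot_modr.
Qed.

Lemma modn_pow2S k a : a %% 2 ^ k.+1 = odd (a %/ 2 ^ k) * 2 ^ k + a %% 2 ^ k.
Proof.
have dvd : 2 ^ k %| 2 ^ k.+1 by rewrite dvdn_exp2l.
have hi : (a %% 2 ^ k.+1) %/ 2 ^ k = odd (a %/ 2 ^ k).
  by rewrite divn_modl // expnS mulnK ?expn_gt0 // modn2.
have lo : (a %% 2 ^ k.+1) %% 2 ^ k = a %% 2 ^ k by exact: modn_dvdm.
by rewrite {1}(divn_eq (a %% 2 ^ k.+1) (2 ^ k)) hi lo.
Qed.

Lemma eq_modn_pow2S k a b : (a %% 2 ^ k.+1 == b %% 2 ^ k.+1) =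
  (a %% 2 ^ k == b %% 2 ^ k) && (odd (a %/ 2 ^ k) == odd (b %/ 2 ^ k)).
Proof.
rewrite !modn_pow2S; apply/eqP/andP => [e|[/eqP -> /eqP -> //]].
have pk : 0 < 2 ^ k by rewrite expn_gt0.
have := congr1 (modn^~ (2 ^ k)) e; rewrite /= !modnMDl !modn_mod => ->.
have := congr1 (divn^~ (2 ^ k)) e.
rewrite /= !divnMDl // !(divn_small (ltn_pmod _ pk)) !addn0.
by case: (odd _); case: (odd _).
Qed.

End Bits.

Section Walsh.
Variable R : realType.

Lemma sum_sign_bitdot k a b :
  \sum_(j < 2 ^ k) (-1) ^+ (bitdot k a j + bitdot k b j) =
  (a %% 2 ^ k == b %% 2 ^ k)%N%:R * (2 ^ k)%:R :> R.
Proof.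
elim: k a b => [|k IH] a b.
  by rewrite big_ord1 /bitdot !big_ord0 !modn1 eqxx expr0 mul1r.
rewrite eq_modn_pow2S expnS mul2n -addnn big_split_ord natrD /=.
under eq_bigr => j _ do rewrite !bitdotS_low ?ltn_ord //.
under [X in _ + X]eq_bigr => j _ do rewrite !bitdotS_high ?ltn_ord // addnACA exprD.
rewrite -mulr_suml IH.
by case: (_ == _); case: (odd (a %/ 2 ^ k)); case: (odd (b %/ 2 ^ k));
  rewrite /= ?expr0 ?expr1; ring.
Qed.

Lemma sqrt_pow2_gt0 k : 0 < Num.sqrt ((2 ^ k)%:R : R).
Proof. by rewrite sqrtr_gt0 ltr0n expn_gt0. Qed.

Lemma walsh_sqr k a b : walsh R k a b ^+ 2 = ((2 ^ k)%:R)^-1.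
Proof. by rewrite mxE expr_div_n sqrr_sign sqr_sqrtr ?ler0n // div1r. Qed.

Lemma walsh_sym k a b : walsh R k a b = walsh R k b a.
Proof. by rewrite !mxE bitdot_sym. Qed.

Lemma walsh_tr k : (walsh R k)^T = walsh R k.
Proof. by apply/matrixP => a b; rewrite mxE walsh_sym. Qed.

Lemma walsh_mul k : walsh R k *m walsh R k = 1%:M.
Proof.
apply/matrixP => a b; rewrite !mxE.
have -> : \sum_j walsh R k a j * walsh R k j b =
    (\sum_(j < 2 ^ k) (-1) ^+ (bitdot k a j + bitdot k b j)) / (2 ^ k)%:R.
  rewrite mulr_suml; apply: eq_bigr => j _; rewrite (walsh_sym j b) !mxE exprD.
  rewrite -[in RHS](sqr_sqrtr (ler0n R (2 ^ k))).
  by field; rewrite gt_eqF ?sqrt_pow2_gt0.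
by rewrite sum_sign_bitdot !modn_small // mulfK // pnatr_eq0 -lt0n expn_gt0.
Qed.

End Walsh.

Ltac eq_simpl :=
  repeat match goal with
  | H : is_true (?x != ?y) |- _ =>
      move: H => /negbTE H; have ? : (y == x) = false by rewrite eq_sym H
  end;
  repeat match goal with
  | H : (?x == ?y) = false |- context [?x == ?y] => rewrite H
  | |- context [?x == ?x] => rewrite eqxx
  end; rewrite /=.

Lemma sumr_delta (R : pzSemiRingType) n (x : 'I_n) (g : 'I_n -> R) :
  \sum_l (x == l)%:R * g l = g x.
Proof.
rewrite (bigD1 x) //= eqxx mul1r big1 ?addr0 // => l; rewrite eq_sym => /negbTE ->.
by rewrite mul0r.
Qed.

Section Rotation.
Variable R : realType.
Variables (n : nat) (i i' : 'I_n) (th : R).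
Hypothesis ii' : i != i'.

Variant rot_index_spec (a : 'I_n) : bool -> bool -> Type :=
  | RotIndexI of a = i : rot_index_spec a true false
  | RotIndexI' of a = i' : rot_index_spec a false true
  | RotIndexOther of a != i & a != i' : rot_index_spec a false false.

Lemma rot_indexP a : rot_index_spec a (a == i) (a == i').
Proof.
have [->|ai] := eqVneq a i; first by rewrite (negbTE ii'); constructor.
by have [->|ai'] := eqVneq a i'; constructor.
Qed.

Lemma rot_mxE a l : rot_mx i i' th a l =
  if a == i then (i == l)%:R * cos th + (i' == l)%:R * sin th
  else if a == i' then (i == l)%:R * - sin th + (i' == l)%:R * cos th
  else (a == l)%:R.
Proof.
have := ii'; rewrite mxE.
case: (rot_indexP a) => [?|?|ai ai']; case: (rot_indexP l) => [?|?|li li'];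
by subst; move=> ?; eq_simpl; first [ring | case: (_ == _)].
Qed.

Lemma sum_rot_mx a (f : 'I_n -> R) : \sum_l rot_mx i i' th a l * f l =
  if a == i then cos th * f i + sin th * f i'
  else if a == i' then - sin th * f i + cos th * f i'
  else f a.
Proof.
under eq_bigr do rewrite rot_mxE.
case: ifP => _; [|case: ifP => _]; last by rewrite sumr_delta.
all: under eq_bigr do rewrite mulrDl -!mulrA.
all: by rewrite big_split /= !sumr_delta; ring.
Qed.

Lemma rot_mulmxE (M : 'M[R]_n) a b : (rot_mx i i' th *m M) a b =
  if a == i then cos th * M i b + sin th * M i' b
  else if a == i' then - sin th * M i b + cos th * M i' b
  else M a b.
Proof. by rewrite mxE sum_rot_mx. Qed.

Lemma mulmx_rot_trE (M : 'M[R]_n) a b : (M *m (rot_mx i i' th)^T) b a =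
  if a == i then cos th * M b i + sin th * M b i'
  else if a == i' then - sin th * M b i + cos th * M b i'
  else M b a.
Proof. by rewrite mxE; under eq_bigr do rewrite mxE mulrC; rewrite sum_rot_mx. Qed.

Lemma rot_mx_orth : rot_mx i i' th *m (rot_mx i i' th)^T = 1%:M.
Proof.
apply/matrixP => b a; rewrite mulmx_rot_trE !rot_mxE mxE.
have := ii'; have := cos2Dsin2 th.
case: (rot_indexP a) => [?|?|ai ai']; case: (rot_indexP b) => [?|?|bi bi'];
by subst; move=> ? ?; eq_simpl; first [nra | case: (_ == _)].
Qed.

End Rotation.

Lemma invmx_eq (R : comUnitRingType) n (A B : 'M[R]_n) : A *m B = 1%:M -> invmx A = B.
Proof.
move=> AB; have [Au _] := mulmx1_unit AB.
by rewrite -[invmx A]mulmx1 -AB mulmxA mulVmx // mul1mx.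
Qed.

Lemma sumr_sub_two (V : zmodType) n (F G : 'I_n -> V) j j' : j != j' ->
  (forall a, a != j -> a != j' -> F a = G a) ->
  \sum_a F a - \sum_a G a = F j + F j' - (G j + G j').
Proof.
move=> jj' FG.
have split2 (H : 'I_n -> V) : \sum_a H a = \sum_(a | (a != j) && (a != j')) H a + (H j + H j').
  by rewrite (bigD1 j) //= (bigD1 j') 1?eq_sym //= addrA addrC.
rewrite (split2 F) (split2 G) (eq_bigr G) => [|a /andP[]]; last exact: FG.
by rewrite opprD addrACA subrr add0r.
Qed.

Section Potential.
Variable R : realType.

Definition row_ent n (M : 'M[R]_n) a : R := \sum_b ent (M a b * invmx M b a).

Definition potential n (M : 'M[R]_n) : R := \sum_a row_ent M a.

Definition cross_weights_le n (kap : R) (M : 'M[R]_n) : Prop :=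
  forall a, \sum_b `|M a b| * `|invmx M b a| <= kap.

Lemma potential1 n : potential (1%:M : 'M[R]_n) = 0.
Proof.
rewrite /potential /row_ent invmx1; apply: big1 => a _; apply: big1 => b _.
by rewrite !mxE eq_sym; case: (b == a); rewrite ?mulr1 ?ent1 ?mulr0 ?ent0.
Qed.

Lemma potential_scale_row n (i : 'I_n) c (M : 'M[R]_n) : c != 0 -> M \in unitmx ->
  potential (scale_row i c M) = potential M.
Proof.
move=> c0 Mu.
pose d := \row_a (if a == i then c else 1 : R).
pose d' := \row_a (if a == i then c^-1 else 1 : R).
have eS : scale_row i c M = diag_mx d *m M.
  by apply/matrixP => a b; rewrite mul_diag_mx !mxE; case: ifP; rewrite ?mul1r.
have eI : invmx (scale_row i c M) = invmx M *m diag_mx d'.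
  apply: invmx_eq; rewrite eS mulmxA -(mulmxA _ M) mulmxV // mulmx1 mulmx_diag.
  rewrite -diag_const_mx; congr diag_mx; apply/rowP => j; rewrite !mxE.
  by case: ifP => _; rewrite ?mulfV ?mulr1.
rewrite /potential /row_ent eI eS; apply: eq_bigr => a _; apply: eq_bigr => b _.
rewrite mul_diag_mx mul_mx_diag !mxE; congr ent.
by case: ifP => _; [field | ring].
Qed.

Lemma row_ent_exchange_le n (M N : 'M[R]_n) i i' kap :
  cross_weights_le kap M -> cross_weights_le kap N ->
  (forall b, M i b * invmx M b i + M i' b * invmx M b i' =
             N i b * invmx N b i + N i' b * invmx N b i') ->
  row_ent M i + row_ent M i' - (row_ent N i + row_ent N i') <= 16 * kap.
Proof.
move=> wM wN col.
have weight (X : 'M[R]_n) a : cross_weights_le kap X -> \sum_b `|X a b * invmx X b a| <= kap.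
  by move=> wX; under eq_bigr do rewrite normrM; exact: wX.
rewrite /row_ent -!big_split -sumrB /=.
apply: le_trans (ler_sum _ (fun b _ => le_trans (ler_norm _) (ent_exchange_le (col b)))) _.
rewrite -mulr_sumr !big_split /=.
have := weight _ i wM; have := weight _ i' wM; have := weight _ i wN; have := weight _ i' wN.
lra.
Qed.

Lemma potential_rot n (i i' : 'I_n) th (M : 'M[R]_n) kap : i != i' -> M \in unitmx ->
  cross_weights_le kap M -> cross_weights_le kap (rot_mx i i' th *m M) ->
  potential M - 16 * kap <= potential (rot_mx i i' th *m M).
Proof.
move=> ii' Mu wM wM'; set M' := rot_mx i i' th *m M.
have eY : invmx M' = invmx M *m (rot_mx i i' th)^T.
  by apply: invmx_eq; rewrite mulmxA -(mulmxA _ M) mulmxV // mulmx1 rot_mx_orth.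
have rows a : a != i -> a != i' -> row_ent M' a = row_ent M a.
  move=> ai ai'; apply: eq_bigr => b _.
  by rewrite rot_mulmxE // eY mulmx_rot_trE // (negbTE ai) (negbTE ai').
have col b : M i b * invmx M b i + M i' b * invmx M b i' =
    M' i b * invmx M' b i + M' i' b * invmx M' b i'.
  rewrite eY !rot_mulmxE // !mulmx_rot_trE // eqxx eq_sym (negbTE ii') eqxx.
  by rewrite -[LHS]mul1r -(cos2Dsin2 th); ring.
have := row_ent_exchange_le wM wM' col.
have := sumr_sub_two ii' rows; rewrite /potential; lra.
Qed.

End Potential.

Section SymmetricInvolution.
Variable R : realType.
Variables (n : nat) (F : 'M[R]_n) (e : R).
Hypotheses (F_invol : F *m F = 1%:M) (F_sym : F^T = F) (e2_lt1 : e ^+ 2 < 1).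

Lemma invmx_id_add_invol : invmx (1%:M + e *: F) = (1 - e ^+ 2)^-1 *: (1%:M - e *: F).
Proof.
apply: invmx_eq; rewrite -scalemxAr mulmxDl mul1mx !mulmxBr mulmx1.
rewrite -!scalemxAl -!scalemxAr F_invol scalerA addrA subrK.
rewrite -[X in X - (e * e) *: _](scale1r (1%:M : 'M[R]_n)) -scalerBl -expr2 scalerA.
by rewrite mulVf ?scale1r // subr_eq0 eq_sym lt_eqF.
Qed.

Lemma id_add_invol_cross a b : (1%:M + e *: F) a b * invmx (1%:M + e *: F) b a =
  ((a == b)%:R - e ^+ 2 * F a b ^+ 2) / (1 - e ^+ 2).
Proof.
have Fba : F b a = F a b by rewrite -[in LHS]F_sym mxE.
rewrite invmx_id_add_invol !mxE Fba [b == a]eq_sym.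
by case: (a == b); rewrite /= ?mulr1n ?mulr0n; field; rewrite subr_eq0 eq_sym lt_eqF.
Qed.

End SymmetricInvolution.

Section LowerBound.
Variable R : realType.

Lemma potential_id_add_walsh k (e : R) : 0 < e -> 2 * e ^+ 2 <= 1 ->
  potential (1%:M + e *: walsh R k) <= - (((2 ^ k)%:R - 1) * e ^+ 2 * ln (2 ^ k)%:R).
Proof.
move=> e_gt0 e_small; set N : R := (2 ^ k)%:R; set A := 1%:M + e *: walsh R k.
have N_gt0 : 0 < N by rewrite ltr0n expn_gt0.
have N_ge1 : 1 <= N by rewrite (ler_nat _ 1) expn_gt0.
have e2_gt0 : 0 < e ^+ 2 by rewrite exprn_gt0.
have e2_lt1 : 0 < 1 - e ^+ 2 by lra.
have cross a b : A a b * invmx A b a = ((a == b)%:R - e ^+ 2 / N) / (1 - e ^+ 2).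
  by rewrite id_add_invol_cross ?walsh_mul ?walsh_tr ?walsh_sqr // -subr_gt0.
set K := - (e ^+ 2 / N * ln N).
have diag a : ent (A a a * invmx A a a) <= 0.
  rewrite cross eqxx; apply: ent_le0; rewrite ler_pdivlMr // mul1r lerD2l lerN2.
  by rewrite ler_pdivrMr // ler_peMr // ltW.
have off a b : b != a -> ent (A a b * invmx A b a) <= K.
  move=> ba; rewrite cross eq_sym (negbTE ba) sub0r mulNr.
  apply: ent_opp_le N_ge1 _ _.
    by rewrite divr_gt0 //= ler_pdivlMr // ler_piMr ?divr_ge0 ?ltW //; lra.
  by rewrite ler_pdivrMr // mulrC ler_pM2l ?invr_gt0 //; lra.
have row a : row_ent A a <= (N - 1) * K.
  have sumK : \sum_(b : 'I_(2 ^ k)) K = K + \sum_(b | b != a) K by rewrite (bigD1 a).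
  rewrite sumr_const card_ord -mulr_natr -/N in sumK.
  have -> : (N - 1) * K = \sum_(b | b != a) K by rewrite mulrBl mul1r mulrC sumK; ring.
  rewrite /row_ent (bigD1 a) //= -[X in _ <= X]add0r.
  by apply: lerD; [exact: diag | exact: ler_sum (off a)].
apply: le_trans (ler_sum _ (fun a _ => row a)) _.
rewrite sumr_const card_ord -mulr_natr -/N.
have -> : (N - 1) * K * N = - ((N - 1) * e ^+ 2 * ln N) by rewrite /K; field; rewrite gt_eqF.
exact: lexx.
Qed.

Lemma cross_weights_le1 n (kap : R) : 1 <= kap -> cross_weights_le kap (1%:M : 'M[R]_n).
Proof.
move=> kap_ge1 a; rewrite invmx1 (bigD1 a) //= big1 ?addr0.
  by rewrite !mxE eqxx normr1 mulr1.
by move=> b /negbTE ba; rewrite !mxE eq_sym ba normr0 mul0r.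
Qed.

Lemma potential_algorithm_ge n m (M : nat -> 'M[R]_n) (kap : R) : 1 <= kap ->
  is_algorithm m M -> (forall t, (1 <= t <= m)%N -> well_cond kap (M t)) ->
  - (16 * kap * m%:R) <= potential (M m).
Proof.
move=> kap_ge1 [M0 steps] wc.
have unit t : (t <= m)%N -> M t \in unitmx.
  by case: t => [|t] tm; [rewrite M0 unitmx1 | case: (wc t.+1 tm)].
have weights t : (t <= m)%N -> cross_weights_le kap (M t).
  case: t => [|t] tm; first by rewrite M0; exact: cross_weights_le1.
  exact/well_cond_row_bound/wc.
suff pot t : (t <= m)%N -> - (16 * kap * t%:R) <= potential (M t) by exact: pot.
elim: t => [_|t IH tm]; first by rewrite M0 potential1 mulr0 oppr0.
have tm' := ltnW tm; have := IH tm'; rewrite -addn1 natrD.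
case: (steps t.+1 tm) => [[i [c [c0 ->]]] | [i [i' [th [ii' eM]]]]].
  by rewrite potential_scale_row ?unit //; lra.
have := weights t.+1 tm; rewrite eM => wM'.
by have := potential_rot ii' (unit t tm') (weights t tm') wM'; rewrite -eM; lra.
Qed.

Lemma walsh_algorithm_length_ge k m (M : nat -> 'M[R]_(2 ^ k)) (e kap : R) :
  0 < e -> 2 * e ^+ 2 <= 1 -> 1 <= kap -> is_algorithm m M ->
  M m = 1%:M + e *: walsh R k -> (forall t, (1 <= t <= m)%N -> well_cond kap (M t)) ->
  ((2 ^ k)%:R - 1) * e ^+ 2 * ln (2 ^ k)%:R <= 16 * kap * m%:R.
Proof.
move=> e_gt0 e_small kap_ge1 alg Mm wc.
have := potential_algorithm_ge kap_ge1 alg wc.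
by have := potential_id_add_walsh k e_gt0 e_small; rewrite -Mm; lra.
Qed.

End LowerBound.

Lemma pow2_mul_ln_le (R : realType) k :
  (2 ^ k)%:R * ln (2 ^ k)%:R <= 2 * (((2 ^ k)%:R - 1) * ln (2 ^ k)%:R) :> R.
Proof.
case: k => [|k]; first by rewrite expn0 ln1 !mulr0.
have N2 : 2 <= (2 ^ k.+1)%:R :> R by rewrite (ler_nat _ 2) -{1}(expn1 2) leq_exp2l.
by have := ln_ge0 (le_trans (ler1n R 2) N2); nra.
Qed.

Theorem proposition2p1 (R : realType) (eps : nat -> R)
  (heps : forall n : nat, 0 < eps n < 2^-1)
  (heps_sub : forall delta : R, 0 < delta ->
     exists N : nat, forall n : nat, (N <= n)%N -> (eps n)^-1 <= powR (n%:R) delta) :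
  forall C : R, 0 < C ->
  exists (c : R) (n0 : nat), 0 < c /\
  forall k : nat, (n0 <= 2 ^ k)%N ->
  forall (m : nat) (M : nat -> 'M[R]_(2 ^ k)),
    is_algorithm m M ->
    M m = 1%:M + eps (2 ^ k)%N *: walsh R k ->
    (forall t : nat, (1 <= t <= m)%N -> well_cond (1 + C * eps (2 ^ k)%N) (M t)) ->
    c * (eps (2 ^ k)%N) ^+ 2 * (2 ^ k)%:R * log2 ((2 ^ k)%:R) <= m%:R.
Proof.
(* The bound holds for every eps in (0, 1/2).  The constant c
   comes from (n - 1) eps^2 ln n <= 16 (1 + C eps) m together with n <= 2 (n - 1). *)
move=> C C_gt0; have ln2_gt0 : 0 < ln (2 : R) by rewrite ln_gt0 // ltr1n.
have C1_gt0 : 0 < 1 + C by lra.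
exists (ln 2 / (32 * (1 + C))), 0%N; split; first by rewrite divr_gt0 // mulr_gt0 //; lra.
move=> k _ m M alg Mm wc; have /andP[e_gt0 e_lt] := heps (2 ^ k)%N.
set e := eps _ in Mm wc e_gt0 e_lt *.
have e_small : 2 * e ^+ 2 <= 1 by nra.
have kap_ge1 : 1 <= 1 + C * e by rewrite lerDl mulr_ge0 // ltW.
have m_ge0 := ler0n R m.
have Cem : C * e * m%:R <= C * m%:R by rewrite ler_wpM2r // ler_piMr ?ltW //; lra.
have := walsh_algorithm_length_ge e_gt0 e_small kap_ge1 alg Mm wc.
have := ler_wpM2l (sqr_ge0 e) (pow2_mul_ln_le R k).
rewrite /log2; set N : R := (2 ^ k)%:R; set L := ln N.
have -> : ln 2 / (32 * (1 + C)) * e ^+ 2 * N * (L / ln 2) =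
    e ^+ 2 * (N * L) / (32 * (1 + C)) by field; rewrite !gt_eqF.
by rewrite ler_pdivrMr ?mulr_gt0 //; lra.
Qed.
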